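(* For all integers $d\ge 4$ and $\ell\ge 4$, the diameter of $CK(d,\ell)$ is at most $2\ell-2$.
   Context: Let $\Sigma=\{0,1,\dots,d\}$. The cyclic Kautz digraph $CK(d,\ell)$ has as vertices all sequences $a_1\ldots a_\ell\in\Sigma^\ell$ with $a_i\neq a_{i+1}$ for $1\le i\le \ell-1$ and $a_1\neq a_\ell$, with an arc from $a_1\ldots a_\ell$ to $b_1\ldots b_\ell$ iff both are vertices and $b_i=a_{i+1}$ for $1\le i\le\ell-1$. The diameter is the maximum over ordered pairs of vertices of the directed distance. *)

From mathcomp Require Import all_boot.
Unset Printing Implicit Defensive.

(* Alphabet Sigma = {0,...,d} is the ordinal type 'I_d.+1.
   Words a_1 ... a_l are sequences; position i (1-based) is nth ord0 a (i-1). *)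

Definition ck_vertex (d l : nat) (a : seq 'I_d.+1) : Prop :=
  size a = l /\
  (forall i, i.+1 < l -> nth ord0 a i != nth ord0 a i.+1) /\
  nth ord0 a 0 != nth ord0 a l.-1.

Definition ck_arc (d l : nat) (a b : seq 'I_d.+1) : Prop :=
  ck_vertex d l a /\ ck_vertex d l b /\
  (forall i, i < l.-1 -> nth ord0 b i = nth ord0 a i.+1).

Inductive ck_walk (d l : nat) : nat -> seq 'I_d.+1 -> seq 'I_d.+1 -> Prop :=
  | ck_walk0 a : ck_vertex d l a -> ck_walk d l 0 a a
  | ck_walkS n a b c : ck_arc d l a b -> ck_walk d l n b c -> ck_walk d l n.+1 a c.

Definition ck_dist_le (d l : nat) (u v : seq 'I_d.+1) (k : nat) : Prop :=
  exists2 n, n <= k & ck_walk d l n u v.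

Definition ck_diam_le (d l k : nat) : Prop :=
  forall u v, ck_vertex d l u -> ck_vertex d l v -> ck_dist_le d l u v k.

From mathcomp Require Import all_boot.
From mathcomp Require Import zify.

(* A walk of length n from u to v in CK(d,l) is the same as a word of length
   n + l that starts with u, ends with v, and all of whose n + 1 windows of
   length l are vertices.  For l < n <= 2l - 2 the windows overlapping both u
   and v only impose conditions on u and v themselves; every other position
   between u and v has to differ from at most four letters (its predecessor,
   the first letter of the window it ends, the last letter of the window it
   starts, and the first letter of v), so with d + 1 >= 5 letters it can be
   filled greedily; n <= 2l - 2 ensures that no window lies strictly between
   u and v.
   Taking n = 2l - 2 works unless u_l = v_1, and then n = 2l - 3 works. *)

Definition window {d} (f : nat -> 'I_d.+1) (l i : nat) : seq 'I_d.+1 :=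
  mkseq (fun j => f (i + j)) l.

Section Windows.
Variables (d l : nat) (f : nat -> 'I_d.+1).

Lemma window_vertex i : 0 < l ->
  (forall j, j.+1 < l -> f (i + j) != f (i + j).+1) ->
  f i != f (i + l.-1) -> ck_vertex d l (window f l i).
Proof.
move=> l_gt0 adj ends; split; first by rewrite size_mkseq.
split=> [j lt_jl|]; rewrite !nth_mkseq ?addn0 ?addnS //; try lia.
exact: adj.
Qed.

Lemma window_arc i :
  ck_vertex d l (window f l i) -> ck_vertex d l (window f l i.+1) ->
  ck_arc d l (window f l i) (window f l i.+1).
Proof.
move=> Vi Vi1; do 2!split=> //.
by move=> j lt_jl; rewrite !nth_mkseq ?addSnnS //; lia.
Qed.

Lemma walk_windows n m :
  (forall i, m <= i <= m + n -> ck_vertex d l (window f l i)) ->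
  ck_walk d l n (window f l m) (window f l (m + n)).
Proof.
elim: n m => [|n IHn] m V; first by rewrite addn0; apply/ck_walk0/V; lia.
apply: (@ck_walkS d l n _ (window f l m.+1)); first by apply: window_arc; apply: V; lia.
by rewrite addnS -addSn; apply: IHn => i lt_i; apply: V; lia.
Qed.

End Windows.

Definition fresh {d} (s : seq 'I_d.+1) : 'I_d.+1 :=
  odflt ord0 [pick x | x \notin s].

Lemma fresh_notin d (s : seq 'I_d.+1) : size s <= d -> fresh s \notin s.
Proof.
rewrite /fresh; case: pickP => [x //|all_in le_s_d].
have : #|'I_d.+1| <= #|s|.
  by apply/subset_leq_card/subsetP => x _; move/negbFE: (all_in x).
by rewrite card_ord => /leq_trans/(_ (card_size s)); rewrite ltnNge le_s_d.
Qed.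

Section Bridge.
Variables (d l n : nat) (u v : seq 'I_d.+1).

Fixpoint bridge (k : nat) : 'I_d.+1 :=
  match k with
  | 0 => nth ord0 u 0
  | k'.+1 =>
      if k < l then nth ord0 u k
      else if k < n then
        fresh [:: bridge k'; nth ord0 u (k - l + 1);
                  nth ord0 v (k + l - 1 - n); nth ord0 v 0]
      else nth ord0 v (k - n)
  end.

Hypotheses (hd : 4 <= d) (l_gt0 : 0 < l) (lt_l_n : l < n) (le_n : n <= 2 * l - 2).

Lemma bridge_head k : k < l -> bridge k = nth ord0 u k.
Proof. by case: k => //= k ->. Qed.

Lemma bridge_tail k : n <= k -> bridge k = nth ord0 v (k - n).
Proof.
case: k => [|k] le_n_k /=; first lia.
by rewrite ifF ?ifF //; lia.
Qed.

Lemma bridge_mid k : l <= k < n ->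
  [/\ bridge k != bridge k.-1, bridge k != nth ord0 u (k - l + 1),
      bridge k != nth ord0 v (k + l - 1 - n) & bridge k != nth ord0 v 0].
Proof.
case: k => [|k] /andP[le_l_k lt_k_n]; first lia.
rewrite /= ifF ?lt_k_n; last lia.
set s := [:: bridge k; _; _; _].
by move: (fresh_notin _ s hd); rewrite !inE !negb_or => /and4P.
Qed.

Hypotheses (Vu : ck_vertex d l u) (Vv : ck_vertex d l v).
Hypothesis uv_compat : forall i, n - l + 1 <= i < l ->
  nth ord0 u i != nth ord0 v (i + l - 1 - n).

Lemma bridge_adjacent k : k.+1 < n + l -> bridge k != bridge k.+1.
Proof.
move=> lt_k; case: Vu => _ [adj_u _]; case: Vv => _ [adj_v _].
have [lt_k1_l|le_l_k1] := ltnP k.+1 l; first by rewrite !bridge_head //; [exact: adj_u|lia].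
have [le_n_k|lt_k_n] := leqP n k.
  by rewrite !bridge_tail ?subSn //; [apply: adj_v|]; lia.
have [lt_k1_n|le_n_k1] := ltnP k.+1 n.
  by have [+ _ _ _] := @bridge_mid k.+1 ltac:(lia); rewrite eq_sym.
have [_ _ _] := @bridge_mid k ltac:(lia).
by rewrite (@bridge_tail k.+1) // (_ : k.+1 - n = 0) //; lia.
Qed.

Lemma bridge_window_ends i : i <= n -> bridge i != bridge (i + l.-1).
Proof.
move=> le_i_n; case: Vu => _ [_ ends_u]; case: Vv => _ [_ ends_v].
have [->|i_gt0] := posnP i; first by rewrite add0n !bridge_head //; lia.
have [lt_end_n|le_n_end] := ltnP (i + l.-1) n.
  have [_ + _ _] := @bridge_mid (i + l.-1) ltac:(lia).
  rewrite (_ : i + l.-1 - l + 1 = i); last lia.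
  by rewrite (@bridge_head i) 1?eq_sym //; lia.
rewrite (bridge_tail _ le_n_end) (_ : i + l.-1 - n = i + l - 1 - n); last lia.
have [lt_i_l|le_l_i] := ltnP i l.
  by rewrite bridge_head //; apply: uv_compat; lia.
have [lt_i_n|le_n_i] := ltnP i n; first by have [_ _ + _] := @bridge_mid i ltac:(lia).
rewrite (_ : i = n) ?bridge_tail ?subnn //; last lia.
by rewrite (_ : n + l - 1 - n = l.-1) //; lia.
Qed.

Lemma bridge_walk : ck_walk d l n u v.
Proof.
case: (Vu) => size_u _; case: (Vv) => size_v _.
have window0 : window bridge l 0 = u.
  apply: (@eq_from_nth _ ord0); rewrite size_mkseq ?size_u // => j lt_jl.
  by rewrite nth_mkseq // bridge_head.
have windown : window bridge l n = v.
  apply: (@eq_from_nth _ ord0); rewrite size_mkseq ?size_v // => j lt_jl.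
  by rewrite nth_mkseq // bridge_tail ?leq_addr // addKn.
have := @walk_windows d l bridge n 0; rewrite add0n window0 windown; apply.
move=> i /andP[_ le_i_n]; apply: window_vertex; [lia | | exact: bridge_window_ends].
by move=> j lt_jl; apply: bridge_adjacent; lia.
Qed.

End Bridge.

Theorem lemma8 (d l : nat) (hd : 4 <= d) (hl : 4 <= l) :
  ck_diam_le d l (2 * l - 2).
Proof.
move=> u v Vu Vv.
case: (Vu) => _ [adj_u _]; case: (Vv) => _ [adj_v _].
have [last_u_eq|last_u_neq] := eqVneq (nth ord0 u l.-1) (nth ord0 v 0).
  exists (2 * l - 3); first lia.
  apply: bridge_walk => //; try lia.
  move=> i range_i; have [->|->] : i = l - 2 \/ i = l - 1 by lia.
    rewrite (_ : l - 2 + l - 1 - (2 * l - 3) = 0); last lia.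
    rewrite -last_u_eq.
    by rewrite (_ : l.-1 = (l - 2).+1); [apply: adj_u|]; lia.
  rewrite (_ : l - 1 + l - 1 - (2 * l - 3) = 1); last lia.
  by rewrite subn1 last_u_eq; apply: adj_v; lia.
exists (2 * l - 2) => //; apply: bridge_walk => //; try lia.
move=> i range_i; rewrite (_ : i = l.-1); last lia.
by rewrite (_ : l.-1 + l - 1 - (2 * l - 2) = 0) //; lia.
Qed.
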